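(* Let $\kappa<0$ and let $u=u(r;u_0)$ be the solution of $\frac{d}{dr}\big(u'/\sqrt{1+u'^2}\big)=\kappa u$, $u(0)=u_0$, $u'(0)=0$, with $$-\sqrt{\frac{-2}\kappa}<u_0<0.$$ Let $R>0$ be the first positive zero of $u$. Then $$\frac1{\sqrt{-2\kappa}}<R<\sqrt{\frac{-2e}\kappa}.$$
   Context: Under the hypothesis on $u_0$, $u$ is defined on all of $\mathbb R$, periodic, increasing on $[0,R]$, and has positive zeros; it is the profile of a pendent $\kappa$-cylindrical surface. *)

From Stdlib Require Import Reals.
From Coquelicot Require Import Coquelicot.
Open Scope R_scope.

Definition is_cyl_profile (kappa u0 : R) (u du : R -> R) : Prop :=
  (forall r, is_derive u r (du r)) /\
  (forall r, is_derive (fun s => du s / sqrt (1 + (du s)^2)) r (kappa * u r)) /\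
  u 0 = u0 /\ du 0 = 0.

Definition first_pos_zero (u : R -> R) (Rz : R) : Prop :=
  0 < Rz /\ u Rz = 0 /\ (forall r, 0 < r < Rz -> u r <> 0).

(** Write [phi = tilt u' = u' / sqrt (1 + u'^2)], so that [phi' = kappa u] and
    [sqrt (1 - phi^2) = 1 / sqrt (1 + u'^2)].

    Lower bound: [sqrt (1 - phi^2) + kappa u^2 / 2] is a first integral, hence
    [|u| <= |u0|] and, at the zero [R], [sqrt (1 - phi(R)^2) = 1 + kappa u0^2 / 2].
    The mean value theorem gives [|phi(R)| <= -kappa |u0| R]; comparing the two
    and using [-kappa u0^2 < 2] yields [-2 kappa R^2 > 1].

    Upper bound: a Sturm comparison with [sin (s r)], [s = sqrt (-kappa)]. The
    Wronskian-like quantity [J = phi cos (s r) + s u sin (s r)] has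
    [J' = s sin (s r) (u' - phi) >= 0] while [u < 0] and [phi >= 0], so
    [J(pi / 2s) = s u(pi / 2s) >= J(0) = 0] forces [R <= pi / 2s].
    Finally [pi^2 < 8 e]. *)

From Stdlib Require Import Reals Lra.
From Coquelicot Require Import Coquelicot.
Open Scope R_scope.

Lemma mean_value (f df : R -> R) (a b : R) :
  (forall x, is_derive f x (df x)) -> a <= b ->
  exists c, a <= c <= b /\ f b - f a = df c * (b - a).
Proof.
  intros Hd Hab.
  destruct (MVT_gen f a b df) as [c [Hc Heq]].
  - intros; apply Hd.
  - intros x _; apply continuity_pt_filterlim, (ex_derive_continuous f).
    eexists; apply Hd.
  - exists c; rewrite Rmin_left, Rmax_right in Hc; auto.
Qed.

Lemma derive_nonneg_le (f df : R -> R) (a b : R) :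
  (forall x, is_derive f x (df x)) -> (forall x, a <= x <= b -> 0 <= df x) ->
  a <= b -> f a <= f b.
Proof.
  intros Hd Hpos Hab.
  destruct (mean_value f df a b Hd Hab) as [c [Hc Heq]].
  assert (0 <= df c * (b - a)) by (apply Rmult_le_pos; [apply Hpos|]; lra).
  lra.
Qed.

Lemma derive_0_eq (f : R -> R) (a b : R) :
  (forall x, is_derive f x 0) -> f a = f b.
Proof.
  intros Hd.
  destruct (Rle_lt_dec a b) as [Hab | Hba].
  - destruct (mean_value f (fun _ => 0) a b Hd Hab) as [c [_ Heq]]; lra.
  - destruct (mean_value f (fun _ => 0) b a Hd (Rlt_le _ _ Hba)) as [c [_ Heq]]; lra.
Qed.

Lemma neg_before_first_pos_zero (u : R -> R) (Rz : R) :
  continuity u -> u 0 < 0 -> first_pos_zero u Rz ->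
  forall r, 0 <= r < Rz -> u r < 0.
Proof.
  intros Hc Hu0 [_ [_ Hnz]] r [Hr0 HrR].
  destruct (Rlt_le_dec (u r) 0) as [| Hge]; auto.
  exfalso.
  destruct (IVT_gen u 0 r 0 Hc) as [x [Hx Hux]].
  { rewrite Rmin_left, Rmax_right; lra. }
  rewrite Rmin_left, Rmax_right in Hx by lra.
  destruct (Req_dec x 0) as [-> | Hx0]; [lra |].
  apply (Hnz x); auto; lra.
Qed.

Lemma is_derive_sqrt_1_minus_sq_plus_sq (c : R) (f g : R -> R) (df dg x : R) :
  is_derive f x df -> is_derive g x dg -> 0 < 1 - f x ^ 2 ->
  is_derive (fun t => sqrt (1 - f t ^ 2) + c * g t ^ 2 / 2) x
    (- f x * df / sqrt (1 - f x ^ 2) + c * g x * dg).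
Proof.
  intros Hf Hg Hpos.
  auto_derive.
  - replace (1 + - (f x * (f x * 1))) with (1 - f x ^ 2) by ring.
    repeat split; auto; eexists; eassumption.
  - replace (Derive (fun t => f t) x) with df by (symmetry; apply is_derive_unique; auto).
    replace (Derive (fun t => g t) x) with dg by (symmetry; apply is_derive_unique; auto).
    replace (1 + - (f x * (f x * 1))) with (1 - f x ^ 2) by ring.
    field; apply Rgt_not_eq, sqrt_lt_R0; auto.
Qed.

Lemma is_derive_sturm (s : R) (f g : R -> R) (df dg x : R) :
  is_derive f x df -> is_derive g x dg ->
  is_derive (fun t => f t * cos (s * t) + s * g t * sin (s * t)) x
    (df * cos (s * x) - f x * (s * sin (s * x))
     + s * (dg * sin (s * x) + g x * (s * cos (s * x)))).
Proof.
  intros Hf Hg.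
  auto_derive.
  - repeat split; eexists; eassumption.
  - replace (Derive (fun t => f t) x) with df by (symmetry; apply is_derive_unique; auto).
    replace (Derive (fun t => g t) x) with dg by (symmetry; apply is_derive_unique; auto).
    ring.
Qed.

Definition tilt (p : R) : R := p / sqrt (1 + p ^ 2).

Lemma sqrt_1_plus_sq_ge_1 (p : R) : 1 <= sqrt (1 + p ^ 2).
Proof. rewrite <- sqrt_1 at 1; apply sqrt_le_1_alt; nra. Qed.

Lemma tilt_sq_compl (p : R) : 1 - tilt p ^ 2 = / (1 + p ^ 2).
Proof.
  unfold tilt.
  pose proof (sqrt_1_plus_sq_ge_1 p).
  assert (Hq2 : sqrt (1 + p ^ 2) ^ 2 = 1 + p ^ 2) by (apply pow2_sqrt; nra).
  replace (1 - (p / sqrt (1 + p ^ 2)) ^ 2)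
    with ((sqrt (1 + p ^ 2) ^ 2 - p ^ 2) / sqrt (1 + p ^ 2) ^ 2) by (field; lra).
  rewrite Hq2; field; nra.
Qed.

Lemma sqrt_tilt_sq_compl (p : R) : sqrt (1 - tilt p ^ 2) = / sqrt (1 + p ^ 2).
Proof. rewrite tilt_sq_compl, sqrt_inv; reflexivity. Qed.

Lemma tilt_sq_compl_pos (p : R) : 0 < 1 - tilt p ^ 2.
Proof. rewrite tilt_sq_compl; apply Rinv_0_lt_compat; nra. Qed.

Lemma tilt_le (p : R) : 0 <= tilt p -> tilt p <= p.
Proof.
  unfold tilt; intros Hpos.
  pose proof (sqrt_1_plus_sq_ge_1 p) as Hq.
  set (q := sqrt (1 + p ^ 2)) in *.
  assert (Hp : 0 <= p).
  { replace p with (p / q * q) by (field; lra); apply Rmult_le_pos; lra. }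
  apply (Rmult_le_reg_r q); [lra |].
  replace (p / q * q) with p by (field; lra).
  nra.
Qed.

Section Profile.

Variables (kappa : R) (u du : R -> R).
Hypothesis kappa_neg : kappa < 0.
Hypothesis u_derive : forall r, is_derive u r (du r).
Hypothesis tilt_du_derive : forall r, is_derive (fun s => tilt (du s)) r (kappa * u r).
Hypothesis du_0 : du 0 = 0.

Lemma tilt_du_0 : tilt (du 0) = 0.
Proof. unfold tilt; rewrite du_0; field; apply Rgt_not_eq, sqrt_lt_R0; lra. Qed.

Lemma profile_energy_const (r : R) :
  sqrt (1 - tilt (du r) ^ 2) + kappa * u r ^ 2 / 2 = 1 + kappa * u 0 ^ 2 / 2.
Proof.
  assert (Hd : forall x,
    is_derive (fun t => sqrt (1 - tilt (du t) ^ 2) + kappa * u t ^ 2 / 2) x 0).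
  { intro x.
    pose proof (is_derive_sqrt_1_minus_sq_plus_sq kappa (fun t => tilt (du t)) u
      _ _ x (tilt_du_derive x) (u_derive x) (tilt_sq_compl_pos (du x))) as H.
    replace 0 with (- tilt (du x) * (kappa * u x) / sqrt (1 - tilt (du x) ^ 2)
                    + kappa * u x * du x); [exact H |].
    pose proof (sqrt_1_plus_sq_ge_1 (du x)).
    rewrite sqrt_tilt_sq_compl; unfold tilt; field; lra. }
  rewrite (derive_0_eq _ r 0 Hd), tilt_du_0.
  replace (1 - 0 ^ 2) with 1 by ring.
  rewrite sqrt_1; reflexivity.
Qed.

Lemma profile_sq_le (r : R) : u r ^ 2 <= u 0 ^ 2.
Proof.
  pose proof (profile_energy_const r).
  assert (sqrt (1 - tilt (du r) ^ 2) <= 1).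
  { rewrite <- sqrt_1 at 2; apply sqrt_le_1_alt.
    pose proof (pow2_ge_0 (tilt (du r))); lra. }
  nra.
Qed.

Lemma first_zero_lower_bound (Rz : R) :
  u 0 <> 0 -> - kappa * u 0 ^ 2 < 2 -> 0 < Rz -> u Rz = 0 ->
  1 < -2 * kappa * Rz ^ 2.
Proof.
  intros Hu0 Hsmall HR HuR.
  set (b := u 0 ^ 2) in *.
  assert (Hb : 0 < b) by (unfold b; nra).
  destruct (mean_value _ _ 0 Rz tilt_du_derive (Rlt_le _ _ HR)) as [c [Hc Hmvt]].
  rewrite tilt_du_0, !Rminus_0_r in Hmvt.
  assert (Htilt : tilt (du Rz) ^ 2 <= kappa ^ 2 * b * Rz ^ 2).
  { rewrite Hmvt.
    pose proof (profile_sq_le c).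
    replace ((kappa * u c * Rz) ^ 2) with (kappa ^ 2 * Rz ^ 2 * u c ^ 2) by ring.
    replace (kappa ^ 2 * b * Rz ^ 2) with (kappa ^ 2 * Rz ^ 2 * b) by ring.
    apply Rmult_le_compat_l; [nra | auto]. }
  assert (Hend : 1 - (1 + kappa * b / 2) ^ 2 = tilt (du Rz) ^ 2).
  { pose proof (profile_energy_const Rz) as HE.
    rewrite HuR in HE; fold b in HE.
    replace (1 + kappa * b / 2) with (sqrt (1 - tilt (du Rz) ^ 2)) by lra.
    rewrite pow2_sqrt by (apply Rlt_le, tilt_sq_compl_pos); ring. }
  (* [1 - (1 + kappa b / 2)^2 = (-kappa b) (1 + kappa b / 4)], then cancel [-kappa b > 0]. *)
  assert (Hcmp : (- kappa * b) * (1 + kappa * b / 4) <= (- kappa * b) * (- kappa * Rz ^ 2))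
    by nra.
  apply Rmult_le_reg_l in Hcmp; nra.
Qed.

Lemma tilt_le_du_of_nonpos (r : R) :
  (forall x, 0 <= x <= r -> u x <= 0) -> 0 <= r -> tilt (du r) <= du r.
Proof.
  intros Hnpos Hr; apply tilt_le.
  rewrite <- tilt_du_0.
  apply (derive_nonneg_le _ _ 0 r tilt_du_derive); [| lra].
  intros x Hx; pose proof (Hnpos x Hx); nra.
Qed.

Lemma sturm_derive (s : R) : s * s = - kappa -> forall x,
  is_derive (fun t => tilt (du t) * cos (s * t) + s * u t * sin (s * t)) x
    (s * sin (s * x) * (du x - tilt (du x))).
Proof.
  intros Hss x.
  pose proof (is_derive_sturm s _ u _ _ x (tilt_du_derive x) (u_derive x)) as H.
  replace kappa with (- (s * s)) in H by lra.
  replace (s * sin (s * x) * (du x - tilt (du x))) with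
    (- (s * s) * u x * cos (s * x) - tilt (du x) * (s * sin (s * x))
     + s * (du x * sin (s * x) + u x * (s * cos (s * x)))) by ring.
  exact H.
Qed.

Lemma first_zero_le_quarter_period (Rz : R) :
  u 0 < 0 -> first_pos_zero u Rz -> Rz <= PI / (2 * sqrt (- kappa)).
Proof.
  intros Hu0 HRz.
  set (s := sqrt (- kappa)).
  assert (Hs : 0 < s) by (apply sqrt_lt_R0; lra).
  assert (Hss : s * s = - kappa) by (apply sqrt_sqrt; lra).
  set (T := PI / (2 * s)).
  assert (HsT : s * T = PI / 2) by (unfold T; field; lra).
  assert (HT : 0 < T) by (unfold T; apply Rdiv_lt_0_compat; [apply PI_RGT_0 | lra]).
  destruct (Rle_lt_dec Rz T) as [| HTR]; auto.
  exfalso.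
  assert (Hcont : continuity u).
  { intro r; apply continuity_pt_filterlim, (ex_derive_continuous u).
    eexists; apply u_derive. }
  assert (Hneg : forall r, 0 <= r <= T -> u r < 0).
  { intros r Hr; apply (neg_before_first_pos_zero u Rz); auto; lra. }
  assert (HJmono : tilt (du 0) * cos (s * 0) + s * u 0 * sin (s * 0)
                   <= tilt (du T) * cos (s * T) + s * u T * sin (s * T)).
  { apply (derive_nonneg_le _ _ 0 T (sturm_derive s Hss)); [| lra].
    intros x Hx.
    assert (0 <= sin (s * x)).
    { apply sin_ge_0; [nra |].
      assert (s * x <= s * T) by nra.
      pose proof PI_RGT_0; lra. }
    assert (tilt (du x) <= du x).
    { apply tilt_le_du_of_nonpos; [| lra].
      intros y Hy; apply Rlt_le, Hneg; lra. }
    apply Rmult_le_pos; [apply Rmult_le_pos |]; lra. }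
  rewrite tilt_du_0, HsT, cos_PI2, sin_PI2, Rmult_0_r, sin_0 in HJmono.
  assert (u T < 0) by (apply Hneg; lra).
  nra.
Qed.

End Profile.

Lemma PI_sq_lt_8_exp_1 : PI ^ 2 < 8 * exp 1.
Proof.
  pose proof PI_4; pose proof PI_RGT_0.
  pose proof (exp_ineq1 1 ltac:(lra)).
  nra.
Qed.

Lemma quarter_period_lt (kappa : R) :
  kappa < 0 -> PI / (2 * sqrt (- kappa)) < sqrt (-2 * exp 1 / kappa).
Proof.
  intros Hk.
  set (s := sqrt (- kappa)).
  assert (Hs : 0 < s) by (apply sqrt_lt_R0; lra).
  assert (Hss : s * s = - kappa) by (apply sqrt_sqrt; lra).
  assert (HT : 0 < PI / (2 * s)) by (apply Rdiv_lt_0_compat; [apply PI_RGT_0 | lra]).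
  rewrite <- (sqrt_pow2 (PI / (2 * s))) by lra.
  apply sqrt_lt_1_alt; split; [nra |].
  replace ((PI / (2 * s)) ^ 2) with (PI ^ 2 / 4 * / (- kappa))
    by (rewrite <- Hss; field; lra).
  replace (-2 * exp 1 / kappa) with (2 * exp 1 * / (- kappa)) by (field; lra).
  apply Rmult_lt_compat_r; [apply Rinv_0_lt_compat; lra |].
  pose proof PI_sq_lt_8_exp_1; lra.
Qed.

Lemma inv_sqrt_lt (a x : R) : 0 < a -> 0 < x -> 1 < a * x ^ 2 -> 1 / sqrt a < x.
Proof.
  intros Ha Hx Hax.
  unfold Rdiv; rewrite Rmult_1_l, <- sqrt_inv, <- (sqrt_pow2 x) by lra.
  apply sqrt_lt_1_alt; split.
  - apply Rlt_le, Rinv_0_lt_compat; lra.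
  - apply (Rmult_lt_reg_l a); auto.
    rewrite Rinv_r; lra.
Qed.

Lemma sq_lt_of_opp_sqrt_lt (a x : R) : 0 <= a -> - sqrt a < x -> x < 0 -> x ^ 2 < a.
Proof.
  intros Ha Hlo Hhi.
  rewrite <- (pow2_sqrt a) by auto.
  pose proof (sqrt_pos a); nra.
Qed.

Theorem mainTheorem18 (kappa u0 : R) (u du : R -> R) (Rz : R) :
  kappa < 0 ->
  - sqrt (-2 / kappa) < u0 < 0 ->
  is_cyl_profile kappa u0 u du ->
  first_pos_zero u Rz ->
  1 / sqrt (-2 * kappa) < Rz < sqrt (-2 * exp 1 / kappa).
Proof.
  intros Hk [Hu0lo Hu0hi] [Hu [Htilt [Hu0 Hdu0]]] HRz.
  pose proof HRz as [HR [HuR _]].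
  subst u0.
  assert (Hsmall : - kappa * u 0 ^ 2 < 2).
  { assert (Hsq : u 0 ^ 2 < -2 / kappa).
    { apply sq_lt_of_opp_sqrt_lt; auto.
      apply Rlt_le, Rdiv_neg_neg; lra. }
    assert (- kappa * (-2 / kappa) = 2) by (field; lra).
    nra. }
  split.
  - apply inv_sqrt_lt; [lra | auto |].
    apply (first_zero_lower_bound kappa u du); auto; lra.
  - eapply Rle_lt_trans.
    + apply (first_zero_le_quarter_period kappa u du); auto.
    + apply quarter_period_lt; auto.
Qed.
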